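(* Let $G=\{1,\dots,d\}^m$ and let $S\subseteq G$ be the set of groups obtained by sampling groups independently and uniformly at random from $G$. Let $c>0$. If the total number of groups sampled is greater than $2cd(m+1+\ln d)$, then $\mathsf{DAff}(S)=G$ with probability at least $1-\frac1c$.
   Context: For $z\in G$, $\sigma(z)\in\{0,1\}^{md}$ is the concatenation of the one-hot encodings of $z_1,\dots,z_m$. For a finite $\mathcal{A}=\{z^{(1)},\dots,z^{(k)}\}\subseteq G$, $\mathsf{DAff}(\mathcal{A})=\{z\in G:\exists\alpha\in\mathbb{R}^k,\ \sum_i\alpha_i=1,\ \sigma(z)=\sum_i\alpha_i\sigma(z^{(i)})\}$, i.e. the set of points of $G$ whose encodings lie in the (ordinary) affine hull of the encodings of $\mathcal{A}$. *)

From HB Require Import structures.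
From mathcomp Require Import all_boot all_order all_algebra.
From mathcomp Require Import boolp reals exp.
Set Implicit Arguments. Unset Strict Implicit. Unset Printing Implicit Defensive.
Import Order.TTheory GRing.Theory Num.Theory.
Local Open Scope ring_scope.

Definition grid (d m : nat) : finType := {ffun 'I_m -> 'I_d}.

(* sigma(z) in {0,1}^{md}: concatenation of one-hot encodings,
   indexed by pairs (coordinate i, value j) *)
Definition onehot (R : ringType) (d m : nat) (z : grid d m) (k : 'I_m * 'I_d) : R :=
  (z k.1 == k.2)%:R.

Definition in_DAff (R : realType) (d m : nat) (A : {set grid d m}) (z : grid d m) : Prop :=
  exists alpha : grid d m -> R,
    \sum_(x in A) alpha x = 1 /\
    forall k : 'I_m * 'I_d, onehot R z k = \sum_(x in A) alpha x * onehot R x k.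

Definition DAff_full (R : realType) (d m : nat) (A : {set grid d m}) : Prop :=
  forall z : grid d m, in_DAff R A z.

Definition sample_set (d m n : nat) (t : {ffun 'I_n -> grid d m}) : {set grid d m} :=
  [set t i | i : 'I_n].

(* probability, over n independent uniform samples from G, that DAff(S) = G *)
Definition prob_DAff_full (R : realType) (d m n : nat) : R :=
  (#|[set t : {ffun 'I_n -> grid d m} | `[< DAff_full R (sample_set t) >]]|%:R)
  / ((#|{: grid d m}| ^ n)%N)%:R.

(* Encode z as henc z = (1, sigma z).  Then DAff(S) = G as soon as the henc
   vectors of S span those of G, a space of dimension at most
   hdim = m (d - 1) + 1.  Put theta = 1 - 1/d.  A set Z whose encodings have
   rank r has #|Z| <= d^m theta^(hdim - r): split Z along one coordinate into
   s nonempty slices; the rank of Z exceeds that of every slice by s - 1, and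
   s theta^(s - 1) is largest at s = d.  So a uniform sample escapes the span
   of a non-spanning S of codimension k with probability at least
   1 - theta^k, and the potential sum_(j <= k) 1 / (1 - theta^j) decreases by
   1 in expectation at each sample until S spans.  Averaging over all
   n-samples, n P(S does not span) is at most the initial potential, which is
   at most 2 d (m + 1 + ln d) by 1 / (1 - theta^j) <= 1 + d / j. *)

From HB Require Import structures.
From mathcomp Require Import all_boot all_order all_algebra.
From mathcomp Require Import boolp reals exp.
From mathcomp Require Import ring lra zify.
Set Implicit Arguments. Unset Strict Implicit. Unset Printing Implicit Defensive.
Import Order.TTheory GRing.Theory Num.Theory.
Local Open Scope ring_scope.

Lemma harmonic_sum_le (R : realType) (N : nat) : (0 < N)%N ->
  \sum_(j < N) (j.+1%:R : R)^-1 <= 1 + ln N%:R.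
Proof.
case: N => // N _; elim: N => [|N IH]; first by rewrite big_ord1 invr1 ln1 addr0.
rewrite big_ord_recr /=.
suff step : (N.+2%:R : R)^-1 <= ln N.+2%:R - ln N.+1%:R.
  by apply: le_trans (lerD IH step) _; lra.
have N2_gt1 : (1 : R) < N.+2%:R by rewrite ltr1n.
have := @le_ln1Dx R (- N.+2%:R^-1).
have -> : 1 - (N.+2%:R : R)^-1 = N.+1%:R / N.+2%:R.
  by rewrite -natr1; field; rewrite nat1r natr1 pnatr_eq0.
rewrite ln_div ?posrE ?ltr0n // ltrN2 invf_lt1 ?(lt_trans ltr01) //.
by move=> /(_ N2_gt1); rewrite -opprB lerN2.
Qed.

Lemma expr1B_mul_le1 (R : realFieldType) (x : R) (j : nat) : 0 <= x <= 1 ->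
  (1 - x) ^+ j * (1 + j%:R * x) <= 1.
Proof.
move=> /andP [x_ge0 x_le1]; elim: j => [|j IH]; first by rewrite expr0 mul0r addr0 mul1r.
apply: le_trans IH; rewrite exprSr -mulrA ler_wpM2l ?exprn_ge0 ?subr_ge0 //.
have := ler0n R j; rewrite -natr1; nra.
Qed.

Lemma inv_1BexprB_le (R : realFieldType) (x : R) (j : nat) : 0 < x <= 1 -> (0 < j)%N ->
  (1 - (1 - x) ^+ j)^-1 <= 1 + (j%:R * x)^-1.
Proof.
move=> /andP [x_gt0 x_le1] j_gt0.
have /(expr1B_mul_le1 j) : 0 <= x <= 1 by rewrite ltW.
have : 0 <= (1 - x) ^+ j by rewrite exprn_ge0 ?subr_ge0.
have : 0 < j%:R * x by rewrite mulr_gt0 ?ltr0n.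
set y := j%:R * x; set T := (1 - x) ^+ j => y_gt0 T_ge0 Ty_le1.
have Ty : T * (1 + y^-1) <= y^-1.
  have -> : T * (1 + y^-1) = y^-1 * (T * (1 + y)) by field; exact: lt0r_neq0.
  by apply: ler_piMr => //; rewrite invr_ge0 ltW.
have T_lt1 : T < 1 by nra.
rewrite -[_^-1]mul1r ler_pdivrMr ?subr_gt0 //; nra.
Qed.

Definition ffun_cons (T : Type) n (x : T) (t : {ffun 'I_n -> T}) : {ffun 'I_n.+1 -> T} :=
  [ffun i => if unlift ord0 i is Some j then t j else x].

Lemma sum_ffunS (V : nmodType) (T : finType) n (F : {ffun 'I_n.+1 -> T} -> V) :
  \sum_u F u = \sum_x \sum_(t : {ffun 'I_n -> T}) F (ffun_cons x t).
Proof.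
rewrite pair_big /= (reindex (fun p => ffun_cons p.1 p.2)) //=.
exists (fun u => (u ord0, [ffun j => u (lift ord0 j)])) => [[x t] _|u _].
  by rewrite /= ffunE unlift_none; congr pair; apply/ffunP => j; rewrite !ffunE liftK.
by apply/ffunP => i; rewrite /= ffunE; case: unliftP => [j ->|->]; rewrite ?ffunE.
Qed.

Section HomogenizedEncoding.
Variables (R : realType) (d m : nat).
Local Notation G := (grid d m).

(* The coordinate [None] is constantly 1, so a linear combination of [henc]
   vectors equal to some [henc z] is an affine combination of encodings. *)
Definition hvec := {ffun option ('I_m * 'I_d) -> R^o}.
Definition henc (z : G) : hvec :=
  [ffun k => if k is Some p then onehot R z p else 1].
Definition hspan (A : {set G}) : {vspace hvec} := (\sum_(x in A) <[henc x]>)%VS.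
Definition hrank (A : {set G}) : nat := \dim (hspan A).
Definition hspanning (A : {set G}) : bool := (hspan setT <= hspan A)%VS.

Lemma henc_hspan (A : {set G}) x : x \in A -> henc x \in hspan A.
Proof. by move=> xA; rewrite memvE (sumv_sup x) // -memvE memv_line. Qed.

Lemma hspan_subv (A : {set G}) (U : {vspace hvec}) :
  (forall x, x \in A -> henc x \in U) -> (hspan A <= U)%VS.
Proof. by move=> AU; apply/subv_sumP => x /AU; rewrite -memvE. Qed.

Lemma hspanS (A B : {set G}) : A \subset B -> (hspan A <= hspan B)%VS.
Proof. by move=> /subsetP AB; apply: hspan_subv => x /AB /henc_hspan. Qed.

Lemma hrankS (A B : {set G}) : A \subset B -> (hrank A <= hrank B)%N.
Proof. by move=> /hspanS /dimvS. Qed.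

Lemma hspanningS (A B : {set G}) : A \subset B -> hspanning A -> hspanning B.
Proof. by move=> /hspanS AB /subv_trans; apply. Qed.

Lemma hrank_setU1 (A : {set G}) z : henc z \notin hspan A ->
  (hrank A < hrank (z |: A))%N.
Proof.
move=> zA; have sub : (<[henc z]> + hspan A <= hspan (z |: A))%VS.
  by rewrite subv_add -memvE henc_hspan ?setU11 // hspanS // subsetUr.
apply: leq_trans (dimvS sub).
by rewrite (ltn_leqif (dimv_leqif_sup (addvSr _ _))) subv_add -memvE negb_and zA.
Qed.

(* No choice is needed: the coefficient is read off the coordinate [None]. *)
Lemma hspanP (A : {set G}) v : v \in hspan A ->
  exists alpha : G -> R, v = \sum_(x in A) alpha x *: henc x.
Proof.
move=> /memv_sumP [vs vsP ->]; exists (fun x => vs x None).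
apply: eq_bigr => x /vsP /vlineP [k ->].
by rewrite !ffunE /= [k%:A]mulr1.
Qed.

Lemma hspanning_DAff (A : {set G}) : hspanning A -> DAff_full R A.
Proof.
move=> spanA z; have /hspanP [alpha zE] : henc z \in hspan A.
  by apply: (subvP spanA); rewrite henc_hspan ?inE.
have zk k : henc z k = \sum_(x in A) alpha x * henc x k.
  by rewrite zE sum_ffunE; apply: eq_bigr => x _; rewrite ffunE.
exists alpha; split => [|k].
  by have := zk None; rewrite ffunE => ->; apply: eq_bigr => x _; rewrite ffunE mulr1.
by have := zk (Some k); rewrite ffunE => ->; apply: eq_bigr => x _; rewrite ffunE.
Qed.

Lemma card_grid : #|G| = (d ^ m)%N.
Proof. by rewrite card_ffun !card_ord. Qed.

Definition hdim := (m * d.-1).+1.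

Lemma henc_neq0 z : henc z != 0.
Proof. by apply/eqP => /ffunP /(_ None); rewrite !ffunE => /eqP; rewrite oner_eq0. Qed.

Lemma hrank_set1 z : (0 < hrank [set z])%N.
Proof.
rewrite -[[set z]]setU0; apply: leq_ltn_trans (hrank_setU1 _) => //.
by rewrite /hspan big_set0 memv0 henc_neq0.
Qed.

(* Every [henc z] is [henc x0] plus a sum of one-coordinate modifications of
   [x0], and there are [m * d.-1] such modified points. *)
Lemma hrank_setT : (0 < d)%N -> (hrank setT <= hdim)%N.
Proof.
move=> d_gt0; pose a0 : 'I_d := Ordinal d_gt0.
pose x0 : G := [ffun => a0].
pose upd i b : G := [ffun j => if j == i then b else a0].
pose Y := henc x0 :: [seq henc (upd i b) | i <- enum 'I_m, b <- rem a0 (enum 'I_d)].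
have sizeY : size Y = hdim.
  by rewrite /= size_allpairs size_enum_ord size_rem ?mem_enum // size_enum_ord.
have upd_Y i b : henc (upd i b) \in <<Y>>%VS.
  apply: memv_span; have [->|b_a0] := eqVneq b a0.
    suff -> : upd i a0 = x0 by exact: mem_head.
    by apply/ffunP => j; rewrite !ffunE if_same.
  rewrite inE; apply/orP; right; apply: allpairs_f; first by rewrite mem_enum.
  by rewrite mem_rem_uniq ?enum_uniq // inE b_a0 mem_enum.
have hencE z : henc z = henc x0 + \sum_i (henc (upd i (z i)) - henc x0).
  apply/ffunP => -[[p a]|]; rewrite !ffunE sum_ffunE; under eq_bigr do rewrite !ffunE.
    rewrite (bigD1 p) //= big1 => [|i]; last first.
      by rewrite eq_sym => /negbTE ip; rewrite /onehot /= !ffunE ip subrr.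
    by rewrite /onehot /= !ffunE eqxx addr0 addrC subrK.
  by rewrite big1 ?addr0 // => i _; rewrite subrr.
rewrite -sizeY; apply: leq_trans (dim_span Y); apply/dimvS/hspan_subv => z _.
have x0_Y : henc x0 \in <<Y>>%VS by rewrite memv_span ?mem_head.
by rewrite hencE memvD // rpred_sum // => i _; rewrite memvB ?upd_Y.
Qed.

Lemma hrank_le_hdim (A : {set G}) : (0 < d)%N -> (hrank A <= hdim)%N.
Proof. by move=> d_gt0; apply: leq_trans (hrankS (subsetT A)) (hrank_setT d_gt0). Qed.

Lemma hspanning_hrank (A : {set G}) : (0 < d)%N -> (hdim <= hrank A)%N -> hspanning A.
Proof.
move=> d_gt0 rkA; suff /eqP spanA : hspan A == hspan setT by rewrite /hspanning spanA.
by rewrite eqEdim hspanS ?subsetT // (leq_trans (hrank_setT d_gt0)).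
Qed.

Lemma henc_notin_hspan (A : {set G}) (z : G) i :
  (forall y, y \in A -> y i != z i) -> henc z \notin hspan A.
Proof.
move=> fresh; apply/negP => /hspanP [alpha] /ffunP /(_ (Some (i, z i))).
rewrite sum_ffunE big1 ?ffunE /onehot /= ?eqxx => [/eqP|y /fresh]; first by rewrite oner_eq0.
by rewrite !ffunE /onehot /= => /negbTE ->; rewrite scaler0.
Qed.

Definition slice (Z : {set G}) i a := [set z : G in Z | z i == a].
Definition values (Z : {set G}) i := [set (z : G) i | z in Z].

Lemma slice_sub (Z : {set G}) i a : slice Z i a \subset Z.
Proof. by apply/subsetP => z; rewrite inE => /andP []. Qed.

Lemma card_slices (Z : {set G}) i :
  #|Z| = (\sum_(a in values Z i) #|slice Z i a|)%N.
Proof.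
rewrite -sum1_card (partition_big (fun z : G => z i) (mem (values Z i))) => [|z zZ].
  by apply: eq_bigr => a _; rewrite -sum1_card; apply: eq_bigl => z; rewrite inE.
exact: imset_f.
Qed.

Lemma hrank_bigcup_slices (Z W : {set G}) i (s : seq 'I_d) :
  uniq s -> {subset s <= values Z i} -> (forall y, y \in W -> y i \notin s) ->
  (hrank W + size s <= hrank (W :|: \bigcup_(b <- s) slice Z i b))%N.
Proof.
elim: s W => [|b s IH] W /=; first by rewrite big_nil setU0 addn0.
move=> /andP [b_s s_uniq] sub W_fresh.
have /imsetP [z zZ zb] := sub b (mem_head _ _).
set U := W :|: \bigcup_(c <- s) slice Z i c.
have U_fresh y : y \in U -> y i != z i.
  rewrite -zb inE bigcup_seq => /orP [/W_fresh|/bigcupP [c c_s]].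
    by rewrite inE negb_or => /andP [].
  by rewrite inE => /andP [_ /eqP ->]; apply: contraNneq b_s => <-.
have rkU : (hrank W + size s <= hrank U)%N.
  apply: IH => // [c c_s|y /W_fresh]; first by apply: sub; rewrite inE c_s orbT.
  by rewrite inE negb_or => /andP [].
rewrite addnS; apply: leq_ltn_trans rkU _.
apply: leq_trans (hrank_setU1 (henc_notin_hspan U_fresh)) (hrankS _).
by rewrite big_cons setUCA -/U setSU // sub1set inE zZ -zb eqxx.
Qed.

Lemma hrank_slice_values (Z : {set G}) i a0 : a0 \in values Z i ->
  (hrank (slice Z i a0) + (#|values Z i| - 1) <= hrank Z)%N.
Proof.
move=> a0_val; rewrite (cardsD1 a0) a0_val add1n subn1 /= cardE.
apply: leq_trans (hrank_bigcup_slices (Z := Z) (i := i) (enum_uniq _) _ _) (hrankS _).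
- by move=> b; rewrite mem_enum !inE => /andP [].
- by move=> y; rewrite !inE mem_enum !inE => /andP [_ /eqP ->]; rewrite eqxx.
by rewrite subUset slice_sub bigcup_seq; apply/bigcupsP => b _; exact: slice_sub.
Qed.

Definition theta : R := 1 - d%:R^-1.

Lemma theta_ge0 : 0 <= theta.
Proof. by rewrite subr_ge0; case: d => [|n]; rewrite ?invr0 ?ler01 // invf_le1 ?ler1n ?ltr0n. Qed.

Lemma theta_le1 : theta <= 1.
Proof. by rewrite lerBlDr lerDl invr_ge0 ler0n. Qed.

Lemma theta_lt1 : (0 < d)%N -> theta < 1.
Proof. by move=> d_gt0; rewrite ltrBlDr ltrDl invr_gt0 ltr0n. Qed.

Lemma theta_mul_expr_le s : (s <= d)%N -> s%:R * theta ^+ s.-1 <= d%:R * theta ^+ d.-1.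
Proof.
case: s => [|s] sd; first by rewrite mul0r mulr_ge0 ?exprn_ge0 ?theta_ge0.
pose f k := k.+1%:R * theta ^+ k.
have f_step k : (k.+1 < d)%N -> f k <= f k.+1.
  move=> kd; rewrite /f exprS mulrA [_ * theta]mulrC ler_wpM2r ?exprn_ge0 ?theta_ge0 //.
  have : k.+2%:R / d%:R <= 1 :> R.
    by rewrite ler_pdivrMr ?ltr0n ?mul1r ?ler_nat // (leq_ltn_trans _ kd).
  rewrite /theta -!natr1; lra.
have f_mono : {in [pred k | (k < d)%N] &, {homo f : i j / (i <= j)%N >-> i <= j}}.
  apply: homo_leq_in => [//|x y z|i j _ jd l /andP [_ lj]|k _ kd]; first exact: le_trans.
  - by rewrite inE (ltn_trans lj jd).
  - exact: f_step.
have d_gt0 : (0 < d)%N := leq_trans (ltn0Sn s) sd.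
by rewrite -[in d%:R](prednK d_gt0); apply: f_mono; rewrite ?inE; lia.
Qed.

Lemma card_theta_hrank_le k (Z : {set G}) : (k <= m)%N ->
  {in Z &, forall x y : G, forall i : 'I_m, (k <= i)%N -> x i = y i} ->
  #|Z|%:R * theta ^+ hrank Z <= (d ^ k)%:R * theta ^+ (k * d.-1).+1.
Proof.
elim: k Z => [|k IH] Z km Zfix.
  have [->|[x xZ]] := set_0Vmem Z; first by rewrite cards0 mul0r mul1r exprn_ge0 ?theta_ge0.
  have -> : Z = [set x].
    apply/setP => y; rewrite inE; apply/idP/eqP => [yZ|->//].
    by apply/ffunP => i; apply: Zfix.
  rewrite cards1 !mul1r expr1 -[X in _ <= X]expr1.
  by rewrite ler_wiXn2l ?theta_ge0 ?theta_le1 ?hrank_set1.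
set i0 : 'I_m := Ordinal km; set A := values Z i0.
set C := (d ^ k)%:R * theta ^+ (k * d.-1).+1.
have sliceC a : #|slice Z i0 a|%:R * theta ^+ hrank (slice Z i0 a) <= C.
  apply: IH (ltnW km) _ => x y; rewrite !inE => /andP [xZ /eqP xa] /andP [yZ /eqP ya] i ki.
  have [->|i_ne] := eqVneq i i0; first by rewrite xa ya.
  apply: Zfix => //; rewrite ltn_neqAle ki andbT.
  by apply: contra i_ne => /eqP ik; apply/eqP/val_inj.
have C_ge0 : 0 <= C by rewrite mulr_ge0 ?exprn_ge0 ?theta_ge0.
have sum_slices : #|Z|%:R * theta ^+ hrank Z <= #|A|%:R * theta ^+ #|A|.-1 * C.
  rewrite (card_slices Z i0) -/A natr_sum mulr_suml mulrAC -mulrA mulr_natl -sumr_const.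
  apply: ler_sum => a aA.
  apply: le_trans (ler_wpM2r (exprn_ge0 #|A|.-1 theta_ge0) (sliceC a)).
  rewrite -mulrA -exprD ler_wpM2l ?ler0n // ler_wiXn2l ?theta_ge0 ?theta_le1 //.
  by rewrite -subn1 hrank_slice_values.
have A_le_d : (#|A| <= d)%N by rewrite -[d in (_ <= d)%N]card_ord max_card.
apply: le_trans sum_slices _; rewrite mulrC.
apply: le_trans (ler_wpM2l C_ge0 (theta_mul_expr_le A_le_d)) _.
by rewrite /C expnSr natrM mulSn -addnS exprD mulrACA [theta ^+ d.-1 * _]mulrC.
Qed.

Lemma theta_expr_hrank_gt0 (S : {set G}) : (hrank S < hdim)%N -> 0 < theta ^+ hrank S.
Proof.
move=> rkS; have [d1|d_ne1] := eqVneq d 1.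
  by move: rkS; rewrite /hdim d1 muln0 ltnS leqn0 => /eqP ->; rewrite expr0 ltr01.
rewrite exprn_gt0 // /theta subr_gt0; case: d d_ne1 => [|[|n]] _ //.
  by rewrite invr0 ltr01.
by rewrite invf_lt1 ?ltr0n // ltr1n.
Qed.

Lemma card_hspan_le (S : {set G}) : (hrank S < hdim)%N ->
  #|[set x | henc x \in hspan S]|%:R <= #|G|%:R * theta ^+ (hdim - hrank S).
Proof.
move=> rkS; set Z := [set x | _].
have rkZ : (hrank Z <= hrank S)%N by apply/dimvS/hspan_subv => x; rewrite inE.
have Zfix : {in Z &, forall x y : G, forall i : 'I_m, (m <= i)%N -> x i = y i}.
  by move=> x y _ _ i; rewrite leqNgt ltn_ord.
rewrite -(ler_pM2r (theta_expr_hrank_gt0 rkS)) card_grid -mulrA -exprD subnK; last exact: ltnW.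
apply: le_trans (card_theta_hrank_le (leqnn m) Zfix).
by rewrite ler_wpM2l ?ler0n // ler_wiXn2l ?theta_ge0 ?theta_le1.
Qed.

(* A fresh sample leaves a span of codimension [j] with probability at least
   [escape j], so [wait k] bounds the expected number of samples needed to
   reach full rank from codimension [k]. *)
Definition escape j := 1 - theta ^+ j.
Definition wait k := \sum_(j < k) (escape j.+1)^-1.
Definition pot (S : {set G}) := wait (hdim - hrank S).

Lemma escape_gt0 j : (0 < d)%N -> (0 < j)%N -> 0 < escape j.
Proof.
move=> d_gt0 j_gt0; rewrite subr_gt0 (le_lt_trans _ (theta_lt1 d_gt0)) //.
by rewrite -[X in _ <= X]expr1 ler_wiXn2l ?theta_ge0 ?theta_le1.
Qed.

Lemma wait_ge0 k : (0 < d)%N -> 0 <= wait k.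
Proof. by move=> d_gt0; apply: sumr_ge0 => j _; rewrite invr_ge0 ltW ?escape_gt0. Qed.

Lemma wait_le a b : (0 < d)%N -> (a <= b)%N -> wait a <= wait b.
Proof.
move=> d_gt0 ab; rewrite /wait -(subnKC ab) big_split_ord /= lerDl.
by apply: sumr_ge0 => j _; rewrite invr_ge0 ltW ?escape_gt0.
Qed.

Lemma potS (A B : {set G}) : (0 < d)%N -> A \subset B -> pot B <= pot A.
Proof. by move=> d_gt0 AB; rewrite wait_le ?leq_sub2l ?hrankS. Qed.

Lemma pot_setU1 (S : {set G}) x : (0 < d)%N -> henc x \notin hspan S ->
  pot (x |: S) <= pot S - (escape (hdim - hrank S))^-1.
Proof.
move=> d_gt0 xS; have rkSx := hrank_setU1 xS.
have : (hdim - hrank (x |: S) < hdim - hrank S)%N.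
  by rewrite ltn_sub2l // (leq_trans rkSx) ?hrank_le_hdim.
rewrite /pot; case: (hdim - hrank S)%N => // k rk_le.
by rewrite /wait big_ord_recr /= addrK -/(wait k) wait_le.
Qed.

Lemma sum_pot_setU1 (S : {set G}) : (0 < d)%N -> ~~ hspanning S ->
  \sum_x pot (x |: S) <= #|G|%:R * (pot S - 1).
Proof.
move=> d_gt0 nspanS.
have rkS : (hrank S < hdim)%N by rewrite ltnNge; apply: contra nspanS; apply: hspanning_hrank.
set Z := [set x | henc x \in hspan S]; set e := escape (hdim - hrank S).
have e_gt0 : 0 < e by rewrite escape_gt0 ?subn_gt0.
have sum_in : \sum_(x in Z) pot (x |: S) <= #|Z|%:R * pot S.
  by rewrite mulr_natl -sumr_const; apply: ler_sum => x _; rewrite potS // subsetUr.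
have sum_out : \sum_(x | x \notin Z) pot (x |: S) <= #|~: Z|%:R * (pot S - e^-1).
  rewrite mulr_natl -sumr_const (eq_bigl (mem (~: Z))) => [|x]; last by rewrite !inE.
  by apply: ler_sum => x; rewrite !inE => xZ; apply: pot_setU1.
have card_out : #|G|%:R <= #|~: Z|%:R / e.
  rewrite ler_pdivlMr //; have := card_hspan_le rkS.
  rewrite -/Z /e /escape -(cardsC Z) natrD.
  by move: (theta ^+ _) #|Z|%:R #|~: Z|%:R => t a b; lra.
rewrite (bigID (mem Z)) /=; apply: le_trans (lerD sum_in sum_out) _.
move: card_out; rewrite -(cardsC Z) natrD.
by move: (pot S) e^-1 #|Z|%:R #|~: Z|%:R => p u a b; lra.
Qed.

Lemma sum_pot_nspan_setU1_le (S : {set G}) n : (0 < d)%N ->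
  \sum_x (pot (x |: S) + n.+1%:R * (~~ hspanning (x |: S))%:R)
    <= #|G|%:R * (pot S + n%:R * (~~ hspanning S)%:R).
Proof.
move=> d_gt0; have [spanS|nspanS] /= := boolP (hspanning S).
  rewrite mulr0 addr0 mulr_natl -sumr_const; apply: ler_sum => x _.
  by rewrite (hspanningS (subsetUr _ _) spanS) /= mulr0 addr0 potS ?subsetUr.
have sum_nspan : \sum_x n.+1%:R * (~~ hspanning (x |: S))%:R <= #|G|%:R * n.+1%:R :> R.
  rewrite mulr_natl -sumr_const; apply: ler_sum => x _.
  by rewrite ler_piMr ?ler0n //; case: hspanning.
rewrite mulr1 big_split /=; apply: le_trans (lerD (sum_pot_setU1 d_gt0 nspanS) sum_nspan) _.
by rewrite -natr1; move: #|G|%:R (pot S) n%:R => g p k; lra.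
Qed.

Lemma sample_set_cons n x (t : {ffun 'I_n -> G}) :
  sample_set (ffun_cons x t) = x |: sample_set t.
Proof.
apply/setP => y; rewrite !inE; apply/imsetP/orP => [[i _ ->]|[/eqP ->|/imsetP [j _ ->]]].
- by rewrite ffunE; case: unliftP => [j _|_]; [right; apply: imset_f | left].
- by exists ord0; rewrite ?ffunE ?unlift_none.
- by exists (lift ord0 j); rewrite ?ffunE ?liftK.
Qed.

Lemma sample_set0 (t : {ffun 'I_0 -> G}) : sample_set t = set0.
Proof. by apply/setP => y; rewrite inE; apply/imsetP => -[[]]. Qed.

Lemma sum_pot_samples_le n : (0 < d)%N ->
  \sum_(t : {ffun 'I_n -> G})
      (pot (sample_set t) + n%:R * (~~ hspanning (sample_set t))%:R)
    <= (#|G| ^ n)%:R * wait hdim.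
Proof.
move=> d_gt0; elim: n => [|n IH].
  rewrite (eq_bigr (fun _ => wait hdim)) => [|t _]; last first.
    by rewrite sample_set0 mul0r addr0 /pot /hrank /hspan big_set0 dimv0 subn0.
  by rewrite sumr_const card_ffun card_ord mulr_natl.
rewrite sum_ffunS exchange_big /=; under eq_bigr do under eq_bigr do rewrite sample_set_cons.
apply: le_trans (ler_sum _ (fun t _ => sum_pot_nspan_setU1_le (sample_set t) n d_gt0)) _.
by rewrite -mulr_sumr expnS natrM -mulrA ler_wpM2l ?ler0n.
Qed.

Lemma wait_hdim_le : (0 < d)%N -> wait hdim <= 2 * d%:R * (m%:R + 1 + ln d%:R).
Proof.
move=> d_gt0; have d_pos : (0 : R) < d%:R by rewrite ltr0n.
have inv_escape j : (escape j.+1)^-1 <= 1 + d%:R / j.+1%:R.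
  have x01 : 0 < (d%:R : R)^-1 <= 1 by rewrite invr_gt0 d_pos invf_le1 // ler1n.
  by have := inv_1BexprB_le x01 (ltn0Sn j); rewrite invfM invrK mulrC.
have wait_harmonic : wait hdim <= hdim%:R + d%:R * (1 + ln hdim%:R).
  rewrite /wait; apply: le_trans (_ : _ <= \sum_(j < hdim) (1 + d%:R / j.+1%:R)) _.
    by apply: ler_sum => j _; exact: inv_escape.
  rewrite big_split /= sumr_const card_ord -mulr_sumr lerD2l.
  by apply: ler_wpM2l; [exact: ltW | exact: harmonic_sum_le].
have ln_hdim : ln hdim%:R <= ln d%:R + m%:R :> R.
  apply: le_trans (_ : ln (d * m.+1)%:R <= _).
    by rewrite ler_ln ?posrE ?ltr0n ?muln_gt0 ?d_gt0 // ler_nat /hdim -subn1; nia.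
  rewrite natrM lnM ?posrE ?ltr0n // lerD2l -addn1 natrD addrC le_ln1Dx //.
  by rewrite (lt_le_trans _ (ler0n _ m)) // ltrN10.
have hdim_le : hdim%:R <= d%:R * m%:R + 1 :> R.
  by rewrite -natrM natr1 ler_nat /hdim -subn1; nia.
have dlnd_ge0 : 0 <= d%:R * ln d%:R :> R by rewrite mulr_ge0 ?ln_ge0 ?ler1n ?ler0n.
have d_ge1 : 1 <= d%:R :> R by rewrite ler1n.
have := ler_wpM2l (ltW d_pos) ln_hdim.
move: wait_harmonic; rewrite !mulrDr; lra.
Qed.

Lemma card_nspanning_le n : (0 < d)%N ->
  n%:R * #|[set t : {ffun 'I_n -> G} | ~~ hspanning (sample_set t)]|%:R
    <= (#|G| ^ n)%:R * wait hdim.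
Proof.
move=> d_gt0; apply: le_trans (sum_pot_samples_le n d_gt0).
rewrite -sum1_card natr_sum mulr_sumr big_mkcond /=; apply: ler_sum => t _.
by rewrite inE; case: hspanning; rewrite /= ?mulr0 ?mulr1 ?addr0 ?lerDr; apply: wait_ge0.
Qed.

End HomogenizedEncoding.

Theorem theorem7 (R : realType) (d m n : nat) (c : R) :
  (0 < d)%N -> 0 < c ->
  2 * c * d%:R * (m%:R + 1 + ln (d%:R : R)) < n%:R ->
  1 - c^-1 <= prob_DAff_full R d m n.
Proof.
move=> d_gt0 c_gt0 n_large.
set K : R := (#|{: grid d m}| ^ n)%:R.
set bad := [set t : {ffun 'I_n -> grid d m} | ~~ hspanning R (sample_set t)].
have K_gt0 : 0 < K by rewrite ltr0n expn_gt0 card_grid expn_gt0 d_gt0.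
have K_split : #|bad|%:R + #|~: bad|%:R = K by rewrite -natrD cardsC card_ffun card_ord.
have good_ge : #|~: bad|%:R <=
    #|[set t : {ffun 'I_n -> grid d m} | `[< DAff_full R (sample_set t) >]]|%:R :> R.
  rewrite ler_nat subset_leq_card //; apply/subsetP => t.
  by rewrite !inE negbK => /hspanning_DAff ?; apply/asboolP.
have c_wait : c * @wait R d (hdim d m) <= n%:R.
  apply: le_trans (ltW n_large); rewrite [2 * c]mulrC -!mulrA ler_pM2l // mulrA.
  exact: wait_hdim_le.
have n_gt0 : 0 < n%:R :> R.
  apply: le_lt_trans n_large.
  by rewrite !mulr_ge0 ?ler0n ?(ltW c_gt0) ?addr_ge0 ?ln_ge0 ?ler1n.
have bad_le : #|bad|%:R <= K / c.
  rewrite ler_pdivlMr //; have := card_nspanning_le R m n d_gt0; rewrite -/K -/bad.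
  move: c_wait; move: (wait _ _ _) #|bad|%:R => w b cw_le nb_le.
  have := ler_wpM2r (ltW c_gt0) nb_le; have := ler_wpM2l (ltW K_gt0) cw_le.
  by rewrite -[b * c <= K](ler_pM2l n_gt0); lra.
rewrite /prob_DAff_full -/K ler_pdivlMr // mulrBl mul1r mulrC.
by move: good_ge bad_le K_split; move: (K / c) => Kc; lra.
Qed.
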